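(* For every admissible sequence of bins $\sigma$ and all integers $s',\ell',k\ge 0$ with $k\ge s'+2\ell'$, $$R(\sigma,s'+2\ell',0)\le \mathrm{OPT}(\sigma,s',\ell')+(k-s'-\ell'-1)L+M.$$
   Context: Fix an integer $S>1$, $L=2S-1$, $M=4S-3$. Bins have integer sizes in $[S,M]$ and arrive in a sequence $\sigma$, admissible if it ends with at least as many bins of size $M$ as there are items under consideration. A packing assigns every item to a bin with total item size in each bin at most the bin size; its cost is the sum of the sizes of bins receiving at least one item. A packing is valid if each empty bin is smaller than every item packed in a later bin. A bin is wasteful if its empty space is at least the size of some item packed in a later bin; a packing is thrifty if no bin is wasteful. A partial packing of a finite sequence of bins is reasonable if every bin $b$ of that sequence contains: one item of size $S$ if $\mathrm{size}(b)\in[S,L-1]$; one item of size $L$ if $\mathrm{size}(b)=L$; two items of size $S$ or one item of size $L$ if $\mathrm{size}(b)\in[L+1,L+S-1]$; one item of size $S$ and one of size $L$ if $\mathrm{size}(b)=L+S$; three items of size $S$ or one item of size $S$ and one of size $L$ if $\mathrm{size}(b)\in[L+S+1,2L-1]$. The key bin of a packing is the first bin after which no item of size $L$ remains unpacked or at most two items of size $S$ remain unpacked; the front is the restriction of the packing to the prefix ending with the key bin. A packing is reasonable if it is thrifty and its front is reasonable. $\mathrm{OPT}(\sigma,s,\ell)$ is the minimum cost of a valid packing of $s$ items of size $S$ and $\ell$ items of size $L$ into $\sigma$; $R(\sigma,s,\ell)$ is the maximum cost of a reasonable packing of these items into $\sigma$. *)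

From mathcomp Require Import all_boot all_order all_algebra.
Set Implicit Arguments. Unset Strict Implicit. Unset Printing Implicit Defensive.

Definition Lsz (S : nat) : nat := 2 * S - 1.
Definition Msz (S : nat) : nat := 4 * S - 3.

(* A (finite) sequence of bins is a list of bin sizes; bin i (0-indexed)
   has size  nth 0 sigma i. *)
Definition bin_sizes_ok (S : nat) (sigma : seq nat) : Prop :=
  all (fun x => (S <= x <= Msz S)%N) sigma.

Definition admissible (S : nat) (sigma : seq nat) (n : nat) : Prop :=
  (n <= size sigma)%N /\
  all (fun x => x == Msz S) (drop (size sigma - n) sigma).

(* A packing of items of sizes S and L into sigma is represented by
   a i = number of items of size S in bin i,
   b i = number of items of size L in bin i
   (items of equal size are interchangeable). *)
Definition load (S : nat) (a b : nat -> nat) (i : nat) : nat :=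
  a i * S + b i * Lsz S.

Definition is_packing (S : nat) (sigma : seq nat) (s l : nat)
    (a b : nat -> nat) : Prop :=
  (forall i, (size sigma <= i)%N -> a i = 0 /\ b i = 0) /\
  (\sum_(i < size sigma) a i)%N = s /\
  (\sum_(i < size sigma) b i)%N = l /\
  (forall i, (i < size sigma)%N -> (load S a b i <= nth 0 sigma i)%N).

Definition cost (sigma : seq nat) (a b : nat -> nat) : nat :=
  (\sum_(i < size sigma | (0 < a i + b i)%N) nth 0 sigma i)%N.

Definition valid (S : nat) (sigma : seq nat) (a b : nat -> nat) : Prop :=
  forall i j, (i < j)%N -> (j < size sigma)%N -> a i + b i = 0 ->
    ((0 < a j)%N -> (nth 0 sigma i < S)%N) /\
    ((0 < b j)%N -> (nth 0 sigma i < Lsz S)%N).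

Definition valid_packing (S : nat) (sigma : seq nat) (s l : nat)
    (a b : nat -> nat) : Prop :=
  is_packing S sigma s l a b /\ valid S sigma a b.

Definition wasteful (S : nat) (sigma : seq nat) (a b : nat -> nat) (i : nat)
    : Prop :=
  exists j, (i < j)%N /\ (j < size sigma)%N /\
    (((0 < a j)%N /\ (S <= nth 0 sigma i - load S a b i)%N) \/
     ((0 < b j)%N /\ (Lsz S <= nth 0 sigma i - load S a b i)%N)).

Definition thrifty (S : nat) (sigma : seq nat) (a b : nat -> nat) : Prop :=
  forall i, (i < size sigma)%N -> ~ wasteful S sigma a b i.

Definition reasonable_bin (S : nat) (sigma : seq nat) (a b : nat -> nat)
    (i : nat) : Prop :=
  let x := nth 0 sigma i in
  let L := Lsz S in
  ((S <= x <= L - 1)%N -> a i = 1 /\ b i = 0) /\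
  (x = L -> a i = 0 /\ b i = 1) /\
  ((L + 1 <= x <= L + S - 1)%N -> (a i = 2 /\ b i = 0) \/ (a i = 0 /\ b i = 1)) /\
  (x = L + S -> a i = 1 /\ b i = 1) /\
  ((L + S + 1 <= x <= 2 * L - 1)%N ->
      (a i = 3 /\ b i = 0) \/ (a i = 1 /\ b i = 1)).

Definition key_cond (s l : nat) (a b : nat -> nat) (n : nat) : Prop :=
  (\sum_(j < n) b j)%N = l \/ (s <= \sum_(j < n) a j + 2)%N.

(* Bin i (0-indexed) belongs to the front iff the key condition fails after
   each of the prefixes of length 0, 1, ..., i; i.e. the front is the prefix
   of length n0 = the least n with key_cond n. *)
Definition in_front (s l : nat) (a b : nat -> nat) (i : nat) : Prop :=
  forall n, (n <= i)%N -> ~ key_cond s l a b n.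

Definition reasonable_packing (S : nat) (sigma : seq nat) (s l : nat)
    (a b : nat -> nat) : Prop :=
  is_packing S sigma s l a b /\ thrifty S sigma a b /\
  (forall i, (i < size sigma)%N -> in_front s l a b i ->
     reasonable_bin S sigma a b i).

From mathcomp Require Import all_boot all_order all_algebra.
From mathcomp Require Import zify.

(* Let t be the last bin holding an item of the reasonable packing R (all its
   items have size S).  By thriftiness every bin before t is used by R and has
   less than S free space, so a bin holding a S-items has size < (a+1)S.
   If the optimal packing O puts an S-item in some bin j >= t, validity forces
   O to use every bin before j, and R costs no more than O.  Otherwise compare
   bin by bin, charging L for each item: a bin before t costs R about L per
   item and cannot hold more O-items than R-items, a bin after t is empty in
   R, and bin t alone costs R at most M.  Summing gives
   cost R + L (s + l) + L <= cost O + L n + M. *)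

Definition bin_cost (sigma : seq nat) (a b : nat -> nat) (i : nat) : nat :=
  if 0 < a i + b i then nth 0 sigma i else 0.

Lemma cost_bin_cost (sigma : seq nat) (a b : nat -> nat) :
  cost sigma a b = \sum_(i < size sigma) bin_cost sigma a b i.
Proof. by rewrite /cost big_mkcond. Qed.

Section Packings.

Context {S : nat} {sigma : seq nat}.
Hypothesis S_gt0 : 0 < S.
Hypothesis sizes_ok : bin_sizes_ok S sigma.
Local Notation N := (size sigma).
Local Notation L := (Lsz S).
Local Notation M := (Msz S).

Lemma bin_size_bounds {i : nat} : i < N -> S <= nth 0 sigma i <= M.
Proof. by move=> iN; apply: (allP sizes_ok); exact: mem_nth. Qed.

Lemma thrifty_slack_lt {a b : nat -> nat} {i j : nat} :
  thrifty S sigma a b -> i < j -> j < N -> 0 < a j ->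
  nth 0 sigma i < load S a b i + S.
Proof.
move=> thr ij jN aj; rewrite ltnNge; apply/negP => slack.
apply: (thr i (ltn_trans ij jN)); exists j; do 2!split=> //.
by left; split=> //; lia.
Qed.

Lemma valid_used_before {a b : nat -> nat} {i j : nat} :
  valid S sigma a b -> i < j -> j < N -> 0 < a j -> 0 < a i + b i.
Proof.
move=> val ij jN aj; rewrite lt0n; apply/eqP => empty.
have /andP[+ _] := bin_size_bounds (ltn_trans ij jN).
by have [/(_ aj) + _] := val i j ij jN empty; lia.
Qed.

Section ThriftyPacking.

Context {n : nat} {aR bR : nat -> nat}.
Hypothesis packR : is_packing S sigma n 0 aR bR.
Hypothesis thriftyR : thrifty S sigma aR bR.

Lemma no_L_items (i : nat) : i < N -> bR i = 0.
Proof.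
have [_ [_ [/eqP sumb _]]] := packR; move: sumb.
rewrite sum_nat_eq0 => /forallP sumb iN.
by apply/eqP; exact: (sumb (Ordinal iN)).
Qed.

Lemma exists_last_S_bin : 0 < n ->
  exists t, [/\ t < N, 0 < aR t & forall i, t < i < N -> aR i = 0].
Proof.
have [_ [suma _]] := packR; rewrite -suma lt0n sum_nat_eq0.
case/forallPn=> i0; rewrite -lt0n => ai0.
have ex : exists i, (i < N) && (0 < aR i) by exists i0; rewrite ltn_ord ai0.
have ub i : (i < N) && (0 < aR i) -> i <= N by case/andP=> /ltnW.
have [t /andP[tN aRt] tmax] := ex_maxnP ex ub.
exists t; split=> // i /andP[ti iN]; apply/eqP; rewrite -leqn0 leqNgt.
by apply/negP => ai; have := tmax i; rewrite iN ai => /(_ isT); lia.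
Qed.

Section LastSBin.

Context {t : nat}.
Hypothesis t_lt : t < N.
Hypothesis aR_t : 0 < aR t.
Hypothesis aR_after : forall i, t < i < N -> aR i = 0.

Lemma bin_cost_after (i : nat) : t < i < N -> bin_cost sigma aR bR i = 0.
Proof.
by case/andP=> ti iN; rewrite /bin_cost aR_after ?ti // no_L_items.
Qed.

Lemma full_before_last {i : nat} : i < t ->
  0 < aR i /\ nth 0 sigma i < (aR i).+1 * S.
Proof.
move=> it; have iN := ltn_trans it t_lt.
have := thrifty_slack_lt thriftyR it t_lt aR_t.
have /andP[Si _] := bin_size_bounds iN.
by rewrite /load no_L_items // mulSn; lia.
Qed.

Lemma cost_le_of_late_S_item {aO bO : nat -> nat} {j : nat} :
  valid S sigma aO bO -> t <= j < N -> 0 < aO j ->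
  cost sigma aR bR <= cost sigma aO bO.
Proof.
move=> validO /andP[tj jN] aOj; rewrite !cost_bin_cost; apply: leq_sum => i _.
have iN := ltn_ord i; case: (ltnP t i) => [ti | it].
  by rewrite bin_cost_after ?ti.
have usedO : 0 < aO i + bO i.
  have [ij | ji] := ltnP i j; first exact: valid_used_before validO ij jN aOj.
  have -> : val i = j by apply/anti_leq; rewrite ji (leq_trans it tj).
  exact: ltn_addr.
by rewrite /bin_cost usedO; case: ifP.
Qed.

Section NoLateSItem.

Context {s l : nat} {aO bO : nat -> nat}.
Hypothesis packO : is_packing S sigma s l aO bO.
Hypothesis aO_late : forall i, t <= i < N -> aO i = 0.

Lemma exchange_bin_before (i : nat) : i < t ->
  bin_cost sigma aR bR i + L * (aO i + bO i) <=
  bin_cost sigma aO bO i + L * aR i.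
Proof.
move=> it; have iN := ltn_trans it t_lt; have [aRi room] := full_before_last it.
have [_ [_ [_ fitsO]]] := packO; have := fitsO i iN.
rewrite /bin_cost /load /Lsz no_L_items // addn0 aRi.
case: ifP => [_ fit | /negbT]; last first.
  by rewrite -leqNgt leqn0 addn_eq0 => /andP[/eqP-> /eqP->]; nia.
rewrite leq_add2l leq_mul2l -ltnS -(ltn_pmul2r S_gt0) orbC.
by rewrite (leq_ltn_trans _ room) //; nia.
Qed.

Lemma exchange_bin_after (i : nat) : t < i < N ->
  bin_cost sigma aR bR i + L * (aO i + bO i) <=
  bin_cost sigma aO bO i + L * aR i.
Proof.
move=> /[dup] /andP[ti iN] tiN; have [_ [_ [_ fitsO]]] := packO.
have := fitsO i iN.
rewrite bin_cost_after // aR_after // /bin_cost /load aO_late ?(ltnW ti) //.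
by case: ifP => [_ | /negbT]; [lia | rewrite -leqNgt leqn0 => /eqP->].
Qed.

(* M < 2L, so bin t holds at most one L-item of O. *)
Lemma exchange_bin_last :
  bin_cost sigma aR bR t + L * (aO t + bO t) + L <=
  bin_cost sigma aO bO t + L * aR t + M.
Proof.
have [_ [_ [_ fitsO]]] := packO; have := fitsO t t_lt.
have /andP[_ tM] := bin_size_bounds t_lt; rewrite /Msz in tM.
rewrite /bin_cost /load no_L_items // addn0 aR_t aO_late ?leqnn // /Lsz /Msz.
case: ifP => [_ fit | /negbT]; last by rewrite -leqNgt leqn0 => /eqP->; nia.
have L_gt0 : 0 < 2 * S - 1 by lia.
have bO_le1 : bO t <= 1 by rewrite -ltnS -(ltn_pmul2r L_gt0); lia.
nia.
Qed.

Lemma cost_bound_of_no_late_S_item :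
  cost sigma aR bR + L * (s + l) + L <= cost sigma aO bO + L * n + M.
Proof.
have [_ [sumaO [sumbO _]]] := packO; have [_ [sumaR _]] := packR.
have exchange :
    \sum_(i < N) (bin_cost sigma aR bR i + L * (aO i + bO i)) + L <=
    \sum_(i < N) (bin_cost sigma aO bO i + L * aR i) + M.
  rewrite (bigD1 (Ordinal t_lt)) // [in X in _ <= X](bigD1 (Ordinal t_lt)) //=.
  rewrite addnAC [X in _ <= X]addnAC.
  apply: leq_add; first exact: exchange_bin_last.
  apply: leq_sum => i /eqP ne_t; have iN := ltn_ord i.
  case: (ltngtP i t) => [it | ti | eq_t]; first exact: exchange_bin_before.
    by apply: exchange_bin_after; rewrite ti.
  by case: ne_t; apply: val_inj.
move: exchange; rewrite !big_split -!big_distrr big_split /= sumaO sumbO sumaR.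
by rewrite -!cost_bin_cost.
Qed.

End NoLateSItem.

End LastSBin.

Lemma thrifty_cost_bound {s l : nat} {aO bO : nat -> nat} :
  valid_packing S sigma s l aO bO -> s + l <= n ->
  cost sigma aR bR + L * (s + l + 1) <= cost sigma aO bO + L * n + M.
Proof.
move=> [packO validO] sl_n; have L_le_M : L <= M by rewrite /Lsz /Msz; lia.
have [n0 | n_gt0] := posnP n.
  have [_ [/eqP + _]] := packR; rewrite n0 sum_nat_eq0 => /forallP aR0.
  rewrite cost_bin_cost big1 => [|i _]; first nia.
  by rewrite /bin_cost (eqP (aR0 i)) no_L_items.
have [t [t_lt aR_t aR_after]] := exists_last_S_bin n_gt0.
have [/existsP [j /andP[tj aOj]] | /existsPn late] :=
  boolP [exists j : 'I_N, (t <= j) && (0 < aO j)].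
  have tjN : t <= j < N by rewrite tj ltn_ord.
  by have := cost_le_of_late_S_item aR_after validO tjN aOj; nia.
have aO_late i : t <= i < N -> aO i = 0.
  case/andP=> ti iN; have := late (Ordinal iN).
  by rewrite /= ti /= -eqn0Ngt => /eqP.
by have := cost_bound_of_no_late_S_item t_lt aR_t aR_after packO aO_late; nia.
Qed.

End ThriftyPacking.

End Packings.

Theorem lemma7 (S : nat) (sigma : seq nat) (s' l' k : nat) :
  (1 < S)%N ->
  bin_sizes_ok S sigma ->
  admissible S sigma (s' + 2 * l') ->
  (s' + 2 * l' <= k)%N ->
  forall aR bR aO bO : nat -> nat,
    reasonable_packing S sigma (s' + 2 * l') 0 aR bR ->
    valid_packing S sigma s' l' aO bO ->
    ((cost sigma aR bR)%:Z <=
       (cost sigma aO bO)%:Z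
       + (k%:Z - s'%:Z - l'%:Z - 1) * (Lsz S)%:Z + (Msz S)%:Z)%R.
Proof.
move=> S_gt1 sizes_ok _ n_le_k aR bR aO bO [packR [thriftyR _]] validO.
have items_le : s' + l' <= s' + 2 * l' by lia.
have := thrifty_cost_bound (ltnW S_gt1) sizes_ok packR thriftyR validO items_le.
nia.
Qed.
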